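(* A tensor norm $\beta$ is smooth if and only if the multi-ideal $\mathcal{L}_\beta$ has property [B].
   Context: All spaces are over a fixed field $\mathbb{K}=\mathbb{R}$ or $\mathbb{C}$. $\mathcal{L}(E_1,\ldots,E_n;F)$ is the space of continuous $n$-linear maps with the sup norm, and $E'$ is the dual of $E$. An $n$-tensor norm $\beta_n$ assigns to every $n$-tuple of normed spaces $E_1,\ldots,E_n$ a norm $\beta_n$ on $E_1\otimes\cdots\otimes E_n$. This norm must be a reasonable crossnorm ($\varepsilon_n\le\beta_n\le\pi_n$, injective and projective norms) and satisfy the metric mapping property $\beta_n((u_1\otimes\cdots\otimes u_n)(z))\le\|u_1\|\cdots\|u_n\|\beta_n(z)$. A tensor norm is a sequence $\beta=(\beta_n)_{n\ge1}$ of $n$-tensor norms. $\beta$ is smooth if for every $n$ and all normed $E_1,\ldots,E_n$ the map $\psi\colon(E_1\otimes\cdots\otimes E_n\otimes\mathbb{K},\beta_{n+1})\to(E_1\otimes\cdots\otimes E_n,\beta_n)$, $\psi(x_1\otimes\cdots\otimes x_n\otimes\lambda)=\lambda(x_1\otimes\cdots\otimes x_n)$, is an isometric isomorphism. For a tensor norm $\beta$, $\mathcal{L}_\beta(E_1,\ldots,E_n;F)$ is the set of $A\in\mathcal{L}(E_1,\ldots,E_n;F)$ whose linearization $A_L\colon(E_1\otimes\cdots\otimes E_n,\beta_n)\to F$, $A_L(x_1\otimes\cdots\otimes x_n)=A(x_1,\ldots,x_n)$, is continuous. It carries the norm $\|A\|_{\mathcal{L}_\beta}=\|A_L\|$. For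 $A\in\mathcal{L}(E_1,\ldots,E_n,\mathbb{K};F)$ let $A1\in\mathcal{L}(E_1,\ldots,E_n;F)$ be $A1(x_1,\ldots,x_n)=A(x_1,\ldots,x_n,1)$. A multi-ideal $\mathcal M$ has property [B] if, for every $n$, all Banach spaces $E_1,\ldots,E_n,F$ and every $A\in\mathcal{L}(E_1,\ldots,E_n,\mathbb{K};F)$, we have $A\in\mathcal{M}(E_1,\ldots,E_n,\mathbb{K};F)\iff A1\in\mathcal{M}(E_1,\ldots,E_n;F)$, and in this case $\|A\|_{\mathcal M}=\|A1\|_{\mathcal M}$. (In the statement the property is applied with $F$ ranging over normed tensor products.) *)

From HB Require Import structures.
From mathcomp Require Import all_boot all_order all_algebra.
From mathcomp Require Import all_classical all_reals topology normedtype.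
From mathcomp Require Import complex.
Set Implicit Arguments. Unset Strict Implicit. Unset Printing Implicit Defensive.
Import Order.TTheory GRing.Theory Num.Theory.
Import numFieldNormedType.Exports.
Local Open Scope ring_scope.

Definition scalar_field (R : realType) (b : bool) : numFieldType :=
  if b then (R : numFieldType) else (R[i] : numFieldType).

Section TensorNorms.
Variable K : numFieldType.

(* Algebraic tensor product E_0 (x) ... (x) E_{n-1}, modelled concretely   *)
(* as the span, inside the functions  (prod_i E_i^* ) -> K  (E_i^* the     *)
(* algebraic dual), of the elementary tensors                              *)
(*     x_0 (x) ... (x) x_{n-1} : phi |-> prod_i phi_i (x_i).               *)
(* (This is the standard injective realisation of the algebraic tensor     *)
(* product.)                                                              *)

Definition dualp n (E : 'I_n -> normedModType K) :=
  forall i : 'I_n, {linear E i -> K^o}.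

Definition elem n (E : 'I_n -> normedModType K) (x : forall i, E i)
  : dualp E -> K := fun phi => \prod_(i < n) phi i (x i).

Definition tsum n (E : 'I_n -> normedModType K) (s : seq (K * (forall i, E i)))
  : dualp E -> K := fun phi => \sum_(p <- s) p.1 * elem p.2 phi.

Definition is_tensor n (E : 'I_n -> normedModType K) (z : dualp E -> K) : Prop :=
  exists s, z = tsum s.

(* (u_0 (x) ... (x) u_{n-1})(z) *)
Definition tmap n (E F : 'I_n -> normedModType K)
  (u : forall i, {linear E i -> F i}) (z : dualp E -> K) : dualp F -> K :=
  fun psi => z (fun i => (psi i \o u i : {linear E i -> K^o})).

(* Tensor norms.  beta n E is the (n+1)-tensor norm on                     *)
(* E_0 (x) ... (x) E_n (indices shifted so that n+1 >= 1).                 *)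

Definition raw_tnorm := forall n (E : 'I_n.+1 -> normedModType K), (dualp E -> K) -> K.

Definition is_tensor_norm (beta : raw_tnorm) : Prop :=
  forall n (E : 'I_n.+1 -> normedModType K),
      (forall z w, is_tensor z -> is_tensor w ->
         beta n E (fun phi => z phi + w phi) <= beta n E z + beta n E w) /\
      (forall (c : K) z, is_tensor z ->
         beta n E (fun phi => c * z phi) = `|c| * beta n E z) /\
      (forall z, is_tensor z -> beta n E z = 0 -> z = fun _ => 0) /\
      (* eps_n <= beta_n : |z(phi)| <= beta(z) for phi_i in the dual unit balls *)
      (forall z, is_tensor z -> forall phi : dualp E,
         (forall i (x : E i), `|phi i x| <= `|x|) -> `|z phi| <= beta n E z) /\
      (* beta_n <= pi_n : beta(z) <= sum_k |c_k| prod_i ||x^k_i|| for every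
         representation z = sum_k c_k x^k_0 (x) ... (x) x^k_n *)
      (forall s, beta n E (tsum s) <= \sum_(p <- s) `|p.1| * \prod_(i < n.+1) `|p.2 i|) /\
      (forall (F : 'I_n.+1 -> normedModType K) (u : forall i, {linear E i -> F i})
              (c : 'I_n.+1 -> K),
         (forall i, 0 <= c i) -> (forall i (x : E i), `|u i x| <= c i * `|x|) ->
         forall z, is_tensor z -> beta n F (tmap u z) <= (\prod_(i < n.+1) c i) * beta n E z).

Record tensor_norm := TensorNorm {
  tn : raw_tnorm ;
  tnP : is_tensor_norm tn }.
Arguments tn : clear implicits.
Arguments tn t n E _.

Definition extK_o n (E : 'I_n -> normedModType K) (o : option 'I_n)
  : normedModType K := match o with Some j => E j | None => K^o end.

Definition extK n (E : 'I_n -> normedModType K) : 'I_n.+1 -> normedModType K :=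
  fun i => extK_o E (unlift ord_max i).

Definition ext_pt n (E : 'I_n -> normedModType K) (x : forall i, E i) (lam : K)
  : forall i, extK E i :=
  fun i => match unlift ord_max i as o
                 return extK_o E o with
           | Some j => x j | None => lam end.

Definition ext_dual n (E : 'I_n -> normedModType K) (phi : dualp E)
  : dualp (extK E) :=
  fun i => match unlift ord_max i as o
                 return {linear extK_o E o -> K^o} with
           | Some j => phi j | None => (idfun : {linear K^o -> K^o}) end.

(* psi : E_0 (x) ... (x) E_n (x) K -> E_0 (x) ... (x) E_n,
   x_0 (x) ... (x) x_n (x) lam |-> lam x_0 (x) ... (x) x_n *)
Definition psi_map n (E : 'I_n -> normedModType K) (z : dualp (extK E) -> K)
  : dualp E -> K := fun phi => z (ext_dual phi).

Definition smooth (beta : tensor_norm) : Prop :=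
  forall n (E : 'I_n.+1 -> normedModType K),
  [/\ (forall z : dualp (extK E) -> K, is_tensor z -> is_tensor (psi_map z)),
      (forall z z' : dualp (extK E) -> K, is_tensor z -> is_tensor z' ->
         psi_map z = psi_map z' -> z = z'),
      (forall w : dualp E -> K, is_tensor w ->
         exists2 z : dualp (extK E) -> K, is_tensor z & psi_map z = w) &
      (forall z : dualp (extK E) -> K, is_tensor z ->
         tn beta n E (psi_map z) = tn beta n.+1 (extK E) z)].

Definition multilinear n (E : 'I_n -> normedModType K) (F : normedModType K)
  (A : (forall i, E i) -> F) : Prop :=
  forall (i : 'I_n) (x : forall j, E j),
    linear (fun y : E i => A (@dfwith _ (fun j => E j : Type) x i y)).

Definition cont_multilinear n (E : 'I_n -> normedModType K) (F : normedModType K)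
  (A : (forall i, E i) -> F) : Prop :=
  multilinear A /\ continuous (A : prod_topology E -> F).

(* C bounds the linearisation A_L : (E_0 (x) ... (x) E_n, beta) -> F, i.e.
   ||A_L z|| <= C beta(z) for every tensor z = sum_k c_k x^k_0 (x) ... (x) x^k_n,
   where A_L z = sum_k c_k A(x^k). *)
Definition lin_bound (beta : tensor_norm) n (E : 'I_n.+1 -> normedModType K)
  (F : normedModType K) (A : (forall i, E i) -> F) (C : K) : Prop :=
  forall s : seq (K * (forall i, E i)),
    `|\sum_(p <- s) p.1 *: A p.2| <= C * tn beta n E (tsum s).

Definition in_Lbeta (beta : tensor_norm) n (E : 'I_n.+1 -> normedModType K)
  (F : normedModType K) (A : (forall i, E i) -> F) : Prop :=
  cont_multilinear A /\ exists C, lin_bound beta A C.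

Definition A1 n (E : 'I_n -> normedModType K) (F : normedModType K)
  (A : (forall i, extK E i) -> F) : (forall i, E i) -> F :=
  fun x => A (ext_pt x 1).

(* Property [B] for L_beta.  ||A||_{L_beta} = ||A1||_{L_beta} is expressed
   as: A_L and (A1)_L have exactly the same bounds C. *)
Definition propB (beta : tensor_norm) : Prop :=
  forall n (E : 'I_n.+1 -> normedModType K) (F : normedModType K)
         (A : (forall i, extK E i) -> F),
    cont_multilinear A ->
    (in_Lbeta beta A <-> in_Lbeta beta (A1 A)) /\
    (in_Lbeta beta A -> forall C, lin_bound beta A C <-> lin_bound beta (A1 A) C).

End TensorNorms.

From HB Require Import structures.
From mathcomp Require Import all_boot all_order all_algebra.
From mathcomp Require Import all_classical all_reals topology normedtype.
From mathcomp Require Import ring.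
Set Implicit Arguments. Unset Strict Implicit. Unset Printing Implicit Defensive.
Import Order.TTheory GRing.Theory Num.Theory.
Import numFieldNormedType.Exports.
Local Open Scope ring_scope.

(* Linearity of a multilinear map A in its last (scalar) variable gives
   A (x, l) = l * A1 (x), so the linearisation of A is the linearisation of A1
   composed with psi, a linear bijection between the algebraic tensor
   products; if psi is isometric, A_L and (A1)_L therefore have the same
   bounds.  Conversely, apply [B] to (x, l) |-> l x_0 (x) ... (x) x_n with
   values in (E_0 (x) ... (x) E_n, beta_n), whose A1 is the canonical tensor
   map, and to the canonical tensor map into (E_0 (x) ... (x) E_n (x) K,
   beta_(n+1)): in each case one side has a linearisation of norm at most 1,
   and [B] transfers this bound to the other side, giving the two
   inequalities between beta_n (psi z) and beta_(n+1) z.  All these maps are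
   continuous since beta <= pi bounds them by the product of the norms. *)

Lemma prod_topology_continuous (X : topologicalType) (I : eqType)
    (T : I -> topologicalType) (g : X -> prod_topology T) :
  (forall i, continuous (fun x => g x i)) -> continuous g.
Proof.
move=> cg x; apply/cvg_sup => i.
move=> U /= [? [[W oW <-]]] /= Wgx /filterS; apply; apply: (cg i).
exact: open_nbhs_nbhs.
Qed.

Section Ecast.
Variable A : eqType.

Lemma ecast_inj (T : A -> Type) a a' (e : a = a') (u v : T a) :
  ecast a (T a) e u = ecast a (T a) e v -> u = v.
Proof. by case: a' / e. Qed.

Lemma ecastK (T : A -> Type) a a' (e : a = a') (y : T a') :
  ecast a (T a) e (ecast a (T a) (esym e) y) = y.
Proof. by case: a' / e in y *. Qed.

Variable P : option A -> Type.

Lemma ecast_match_Some o j (e : o = Some j) (f : forall j, P (Some j)) (c : P None) :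
  ecast o (P o) e (match o as o' return P o' with Some j => f j | None => c end)
  = f j.
Proof.
by move: e; case: o => [j'|] e //; case: (e) => ej; subst j';
  rewrite (eq_irrelevance e erefl).
Qed.

Lemma ecast_match_None o (e : o = None) (f : forall j, P (Some j)) (c : P None) :
  ecast o (P o) e (match o as o' return P o' with Some j => f j | None => c end)
  = c.
Proof. by move: e; case: o => [j'|] e //; rewrite (eq_irrelevance e erefl). Qed.

End Ecast.

Section ExtK.
Variable K : numFieldType.
Variables (n : nat) (E : 'I_n -> normedModType K).
Local Notation EO := (extK_o E).

Lemma ecastD o o' (e : o = o') (u v : EO o) :
  ecast o (EO o) e (u + v) = ecast o (EO o) e u + ecast o (EO o) e v.
Proof. by case: o' / e. Qed.

Lemma ecastZ o o' (e : o = o') (a : K) (v : EO o) :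
  ecast o (EO o) e (a *: v) = a *: ecast o (EO o) e v.
Proof. by case: o' / e. Qed.

Lemma normr_ecast o o' (e : o = o') (v : EO o) : `|ecast o (EO o) e v| = `|v|.
Proof. by case: o' / e. Qed.

Lemma ecast_apply o o' (e : o = o') (L : {linear EO o -> K^o}) (v : EO o) :
  L v = (ecast o ({linear EO o -> K^o}) e L) (ecast o (EO o) e v).
Proof. by case: o' / e. Qed.

Definition restr (x : forall i, extK E i) : forall j, E j :=
  fun j => ecast o (EO o) (liftK ord_max j) (x (lift ord_max j)).

Definition lastv (x : forall i, extK E i) : K :=
  ecast o (EO o) (unlift_none ord_max) (x ord_max).

Definition fromK (l : K) : extK E ord_max :=
  ecast o (EO o) (esym (unlift_none ord_max)) l.

Lemma restr_ext_pt x l : restr (ext_pt x l) = x.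
Proof.
by apply: functional_extensionality_dep => j; rewrite /restr ecast_match_Some.
Qed.

Lemma lastv_ext_pt x l : lastv (ext_pt x l) = l.
Proof. by rewrite /lastv ecast_match_None. Qed.

Lemma ext_pt_restr x : ext_pt (restr x) (lastv x) = x.
Proof.
apply: functional_extensionality_dep => i.
case: (unliftP ord_max i) => [j|] ->.
  apply: (@ecast_inj _ (fun o => EO o) _ _ (liftK ord_max j)).
  by rewrite /ext_pt ecast_match_Some.
apply: (@ecast_inj _ (fun o => EO o) _ _ (unlift_none ord_max)).
by rewrite /ext_pt ecast_match_None.
Qed.

Lemma restr_lastv_inj (u v : forall i, extK E i) :
  restr u = restr v -> lastv u = lastv v -> u = v.
Proof. by move=> eq_r eq_l; rewrite -(ext_pt_restr u) -(ext_pt_restr v) eq_r eq_l. Qed.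

Lemma prodr_norm_extK (x : forall i, extK E i) :
  \prod_(i < n.+1) `|x i| = `|lastv x| * \prod_(j < n) `|restr x j|.
Proof.
rewrite (bigD1_ord ord_max) //=; congr (_ * _); first exact: esym (normr_ecast _ _).
by apply: eq_bigr => j _; exact: esym (normr_ecast _ _).
Qed.

Lemma linear_lastK o (e : o = None) (L : {linear EO o -> K^o}) (v : EO o) :
  L v = ecast o (EO o) e v * L (ecast o (EO o) (esym e) (1 : K)).
Proof.
move: e L v; case: o => [j|] e L v //; rewrite (eq_irrelevance e erefl) /=.
by rewrite -[in LHS](mulr1 v) -[v * 1]/(v *: (1 : K^o)) linearZ.
Qed.

Definition restr_dual (Phi : dualp (extK E)) : dualp E :=
  fun j => ecast o ({linear EO o -> K^o}) (liftK ord_max j) (Phi (lift ord_max j)).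

Definition last_coef (Phi : dualp (extK E)) : K := Phi ord_max (fromK 1).

Lemma elem_extK (x : forall i, extK E i) (Phi : dualp (extK E)) :
  elem x Phi = last_coef Phi * (lastv x * elem (restr x) (restr_dual Phi)).
Proof.
rewrite /elem (bigD1_ord ord_max) //= mulrA; congr (_ * _).
  by rewrite (linear_lastK (unlift_none ord_max)) mulrC.
by apply: eq_bigr => j _; exact: (ecast_apply (liftK ord_max j)).
Qed.

Lemma restr_dual_ext_dual phi : restr_dual (ext_dual phi) = phi.
Proof.
apply: functional_extensionality_dep => j.
exact: (ecast_match_Some (P := fun o => {linear EO o -> K^o})).
Qed.

Lemma last_coef_ext_dual phi : last_coef (ext_dual phi) = 1.
Proof.
rewrite /last_coef [LHS](ecast_apply (unlift_none ord_max)) /fromK ecastK.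
by rewrite (ecast_match_None (P := fun o => {linear EO o -> K^o})).
Qed.

Lemma elem_ext_dual (x : forall i, extK E i) (phi : dualp E) :
  elem x (ext_dual phi) = lastv x * elem (restr x) phi.
Proof. by rewrite elem_extK restr_dual_ext_dual last_coef_ext_dual mul1r. Qed.

Local Notation dfw := (@dfwith _ (fun j => extK E j : Type)).
Local Notation dfE := (@dfwith _ (fun j => E j : Type)).

Lemma restr_dfwith_lift w i v : restr (dfw w (lift ord_max i) v) =
  dfE (restr w) i (ecast o (EO o) (liftK ord_max i) v).
Proof.
apply: functional_extensionality_dep => j; rewrite /restr.
have [<-|ij] := eqVneq i j; first by rewrite !dfwithin.
by rewrite !dfwithout //; apply: contra ij => /eqP /lift_inj ->.
Qed.

Lemma lastv_dfwith_lift w i v : lastv (dfw w (lift ord_max i) v) = lastv w.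
Proof. by rewrite /lastv dfwithout // eq_sym neq_lift. Qed.

Lemma restr_dfwith_max w v : restr (dfw w ord_max v) = restr w.
Proof.
apply: functional_extensionality_dep => j; rewrite /restr dfwithout //.
exact: neq_lift.
Qed.

Lemma lastv_dfwith_max w v :
  lastv (dfw w ord_max v) = ecast o (EO o) (unlift_none ord_max) v.
Proof. by rewrite /lastv dfwithin. Qed.

Lemma ext_pt_dfwith_max (y : forall j, E j) (l : K) :
  ext_pt y l = dfw (ext_pt y 1) ord_max (fromK l).
Proof.
apply: restr_lastv_inj; first by rewrite restr_dfwith_max !restr_ext_pt.
by rewrite lastv_dfwith_max lastv_ext_pt /fromK ecastK.
Qed.

Lemma ext_pt_dfwith (y : forall j, E j) i (v : E i) :
  ext_pt (dfE y i v) 1 =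
  dfw (ext_pt y 1) (lift ord_max i) (ecast o (EO o) (esym (liftK ord_max i)) v).
Proof.
apply: restr_lastv_inj; first by rewrite restr_dfwith_lift !restr_ext_pt ecastK.
by rewrite lastv_dfwith_lift !lastv_ext_pt.
Qed.

Lemma ext_pt_continuous :
  continuous (fun x : prod_topology E => (ext_pt x 1 : prod_topology (extK E))).
Proof.
have match_continuous o : continuous (fun x : prod_topology E =>
    match o as o' return EO o' with Some j => x j | None => (1 : K) end).
  by case: o => [j|]; [exact: proj_continuous | exact: cst_continuous].
by apply: prod_topology_continuous => i; exact: match_continuous.
Qed.

End ExtK.

Section Multilinear.
Variable K : numFieldType.
Variables (m : nat) (G : 'I_m -> normedModType K) (F : normedModType K).
Variable M : (forall i, G i) -> F.
Hypothesis M_ml : multilinear M.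

Lemma multilinear_dfwithB z (i : 'I_m) (a b : G i) :
  M (dfwith z i a) - M (dfwith z i b) = M (dfwith z i (a - b)).
Proof.
have add u v : M (dfwith z i (u + v)) = M (dfwith z i u) + M (dfwith z i v).
  by have := M_ml z 1 u v; rewrite !scale1r.
by rewrite -{1}(subrK b a) (add (a - b) b) addrK.
Qed.

Definition interp (x0 x : forall i, G i) (k : nat) : forall i, G i :=
  fun i => if (i < k)%N then x i else x0 i.

Lemma multilinear_telescope x0 x :
  M x - M x0 = \sum_(k < m) M (dfwith (interp x0 x k) k (x k - x0 k)).
Proof.
have z0 : interp x0 x 0 = x0 by apply: functional_extensionality_dep.
have zm : interp x0 x m = x.
  by apply: functional_extensionality_dep => i; rewrite /interp ltn_ord.
rewrite -{1}zm -{2}z0 -(telescope_sumr (fun k => M (interp x0 x k))) //.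
rewrite big_mkord; apply: eq_bigr => k _.
have -> : interp x0 x k.+1 = dfwith (interp x0 x k) k (x k).
  apply: functional_extensionality_dep => j; have [<-|kj] := eqVneq k j.
    by rewrite dfwithin /interp ltnSn.
  rewrite dfwithout // /interp ltnS leq_eqVlt.
  by have -> : (val j == val k) = false by apply/negbTE; rewrite eq_sym.
have {2}-> : interp x0 x k = dfwith (interp x0 x k) k (x0 k).
  apply: functional_extensionality_dep => j; have [<-|kj] := eqVneq k j.
    by rewrite dfwithin /interp ltnn.
  by rewrite dfwithout.
exact: multilinear_dfwithB.
Qed.

Variable C : K.
Hypothesis C_ge0 : 0 <= C.
Hypothesis M_bound : forall x, `|M x| <= C * \prod_(i < m) `|x i|.

Lemma multilinear_local_bound x0 x (d : K) : 0 < d <= 1 ->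
  (forall i, `|x0 i - x i| < d) ->
  `|M x - M x0| <= m%:R * C * \prod_(i < m) (`|x0 i| + 1) * d.
Proof.
move=> /andP[d0 d1] near_x0; set P := \prod_(i < m) _.
have term_bound (k : 'I_m) :
    `|M (dfwith (interp x0 x k) k (x k - x0 k))| <= C * (d * P).
  apply: le_trans (M_bound _) _; apply: ler_wpM2l => //.
  have -> : d * P = \prod_(i < m) ((if i == k then d else 1) * (`|x0 i| + 1)).
    by rewrite big_split /= (bigD1 k) //= eqxx big1 ?mulr1 // => i /negbTE ->.
  apply: ler_prod => i _; rewrite normr_ge0 /=.
  have [<-|ki] := eqVneq k i.
    rewrite dfwithin ?eqxx distrC; apply: le_trans (ltW (near_x0 k)) _.
    by apply: ler_peMr; [exact: ltW | rewrite lerDr].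
  rewrite dfwithout // mul1r /interp; case: ifP => _; last by rewrite lerDl.
  rewrite -[x i](subrK (x0 i)) addrC; apply: le_trans (ler_normD _ _) _.
  by rewrite lerD2l distrC; exact: le_trans (ltW (near_x0 i)) d1.
rewrite multilinear_telescope; apply: le_trans (ler_norm_sum _ _ _) _.
apply: le_trans (_ : _ <= \sum_(k < m) C * (d * P)) _.
  by apply: ler_sum => k _; exact: term_bound.
have -> : \sum_(k < m) C * (d * P) = m%:R * C * P * d.
  by rewrite sumr_const card_ord -mulr_natl; ring.
exact: lexx.
Qed.

Lemma bounded_multilinear_continuous : continuous (M : prod_topology G -> F).
Proof.
move=> x0; have x0_filter : ProperFilter (nbhs (x0 : prod_topology G)).
  exact: nbhs_pfilter.
apply/cvgrPdist_le => e e0.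
set P := \prod_(i < m) (`|x0 i| + 1).
have P0 : 0 < P by apply: prodr_gt0 => i _; rewrite ltr_pwDr.
pose D := m%:R * C * P + 1.
have D0 : 0 < D by rewrite ltr_pwDr // !mulr_ge0 // ltW.
pose r := e / D.
have r0 : 0 < r by rewrite divr_gt0.
pose d := r / (1 + r).
have d0 : 0 < d by rewrite divr_gt0 // addr_gt0.
have d1 : d <= 1 by rewrite ler_pdivrMr ?addr_gt0 // mul1r lerDr ltW.
have d_le : d <= e / D.
  by rewrite ler_pdivrMr ?addr_gt0 // ler_peMr ?lerDl ?ltW.
have near_all : \forall x \near (x0 : prod_topology G), forall i, `|x0 i - x i| < d.
  apply: (@filter_forall _ _ (fun i x => `|x0 i - x i| < d) _ x0_filter) => i.
  by have /cvgrPdist_lt /(_ d d0) := @proj_continuous _ G i x0.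
apply: filterS near_all => x near_x0; rewrite distrC.
apply: le_trans (multilinear_local_bound _ near_x0) _; first by rewrite d0.
apply: le_trans (_ : D * d <= _).
  by apply: ler_wpM2r; [exact: ltW | rewrite lerDl].
by rewrite -ler_pdivlMl // mulrC.
Qed.

End Multilinear.

Section MultilinearExtK.
Variable K : numFieldType.
Variables (n : nat) (E : 'I_n -> normedModType K) (F : normedModType K).
Variable A : (forall i, extK E i) -> F.
Local Notation dfw := (@dfwith _ (fun j => extK E j : Type)).

Lemma multilinear_lastK : multilinear A ->
  forall x, A x = lastv x *: A1 A (restr x).
Proof.
move=> A_ml x; rewrite -{1}(ext_pt_restr x) /A1.
set y := restr x; set l := lastv x.
have A_last := A_ml ord_max (ext_pt y 1).
have A0 : A (dfw (ext_pt y 1) ord_max 0) = 0.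
  have := A_last 1 0 0; rewrite /= !scale1r addr0 => /(canLR (addrK _)).
  by rewrite subrr.
have -> : ext_pt y 1 = dfw (ext_pt y 1) ord_max (fromK E 1).
  by rewrite -ext_pt_dfwith_max.
rewrite ext_pt_dfwith_max.
have -> : fromK E l = l *: fromK E 1 + 0 by rewrite addr0 /fromK -ecastZ /= [l *: _]mulr1.
by rewrite A_last A0 addr0.
Qed.

Lemma A1_cont_multilinear : cont_multilinear A -> cont_multilinear (A1 A).
Proof.
case=> A_ml A_cont; split.
  move=> i y a u v; rewrite /A1 !ext_pt_dfwith ecastD ecastZ.
  exact: A_ml.
by move=> x; exact: (continuous_comp (@ext_pt_continuous _ _ E x) (A_cont (ext_pt x 1))).
Qed.

End MultilinearExtK.

Section Tensor.
Variable K : numFieldType.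
Variables (m : nat) (G : 'I_m -> normedModType K).
Local Notation dfE := (@dfwith _ (fun j => G j : Type)).

Lemma tsum_nil : tsum ([::] : seq (K * (forall i, G i))) = fun _ => 0.
Proof. by apply: funext => phi; rewrite /tsum big_nil. Qed.

Lemma tsum_cons (p : K * (forall i, G i)) s :
  tsum (p :: s) = fun phi => p.1 * elem p.2 phi + tsum s phi.
Proof. by apply: funext => phi; rewrite /tsum big_cons. Qed.

Lemma tsum_cat (s t : seq (K * (forall i, G i))) :
  tsum (s ++ t) = tsum s \+ tsum t.
Proof. by apply: funext => phi; rewrite /tsum big_cat. Qed.

Lemma tsum_scale a (s : seq (K * (forall i, G i))) :
  tsum [seq (a * p.1, p.2) | p <- s] = fun phi => a * tsum s phi.
Proof.
apply: funext => phi; rewrite /tsum big_map mulr_sumr.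
by apply: eq_bigr => p _; rewrite mulrA.
Qed.

Lemma elem_dfwith_linear (y : forall i, G i) j (a : K) (u v : G j) phi :
  elem (dfE y j (a *: u + v)) phi = a * elem (dfE y j u) phi + elem (dfE y j v) phi.
Proof.
have split w : elem (dfE y j w) phi = phi j w * \prod_(i < m | i != j) phi i (y i).
  rewrite /elem (bigD1 j) //= dfwithin; congr (_ * _).
  by apply: eq_bigr => i ij; rewrite dfwithout // eq_sym.
by rewrite !split linearP mulrDl mulrA.
Qed.

Definition tensor_pred : {pred dualp G -> K} := fun z => `[< is_tensor z >].

Lemma tensor_pred_submod_closed : GRing.submod_closed tensor_pred.
Proof.
split; first by apply/asboolP; exists [::]; rewrite tsum_nil.
move=> a u v /asboolP [s ->] /asboolP [t ->]; apply/asboolP.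
by exists ([seq (a * p.1, p.2) | p <- s] ++ t); rewrite tsum_cat tsum_scale.
Qed.

HB.instance Definition _ :=
  GRing.isSubmodClosed.Build K (dualp G -> K) tensor_pred tensor_pred_submod_closed.

Record tensor := Tensor { tval : dualp G -> K ; tvalP : tensor_pred tval }.
HB.instance Definition _ := [isSub for tval].
HB.instance Definition _ := [Choice of tensor by <:].
HB.instance Definition _ := [SubChoice_isSubLmodule of tensor by <:].

Lemma tval_is_tensor (u : tensor) : is_tensor (tval u).
Proof. exact/asboolP/tvalP. Qed.

Lemma tval0 : tval 0 = 0.
Proof. exact: (raddf0 (val : tensor -> dualp G -> K)). Qed.

Lemma tvalD (u v : tensor) : tval (u + v) = tval u + tval v.
Proof. exact: (raddfD (val : tensor -> dualp G -> K)). Qed.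

Lemma tvalZ a (u : tensor) : tval (a *: u) = a *: tval u.
Proof. by []. Qed.

Definition tprod (x : forall i, G i) : tensor :=
  Tensor (@asboolT _ (ex_intro _ [:: ((1 : K), x)] erefl)).

Lemma tval_tprod (x : forall i, G i) : tval (tprod x) = elem x.
Proof. by apply: funext => phi; rewrite /= tsum_cons tsum_nil /= mul1r addr0. Qed.

Lemma tval_sum_tprod (s : seq (K * (forall i, G i))) :
  tval (\sum_(p <- s) p.1 *: tprod p.2) = tsum s.
Proof.
elim: s => [|p s IH]; first by rewrite big_nil tsum_nil tval0.
by rewrite big_cons tvalD tvalZ IH tval_tprod tsum_cons.
Qed.

End Tensor.

Section Psi.
Variable K : numFieldType.
Variables (n : nat) (E : 'I_n -> normedModType K).

Lemma psi_map_ext_pt (s : seq (K * (forall i, E i))) :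
  psi_map (tsum [seq (p.1, ext_pt p.2 1) | p <- s]) = tsum s.
Proof.
apply: funext => phi; rewrite /psi_map /tsum big_map; apply: eq_bigr => p _.
by rewrite /= elem_ext_dual lastv_ext_pt restr_ext_pt mul1r.
Qed.

Lemma psi_map_tsum (s : seq (K * (forall i, extK E i))) :
  psi_map (tsum s) = tsum [seq (p.1 * lastv p.2, restr p.2) | p <- s].
Proof.
apply: funext => phi; rewrite /psi_map /tsum big_map; apply: eq_bigr => p _.
by rewrite /= elem_ext_dual mulrA.
Qed.

Lemma tsum_extK (s : seq (K * (forall i, extK E i))) (Phi : dualp (extK E)) :
  tsum s Phi = last_coef Phi * psi_map (tsum s) (restr_dual Phi).
Proof.
rewrite psi_map_tsum /tsum big_map mulr_sumr; apply: eq_bigr => p _ /=.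
by rewrite elem_extK mulrCA -!mulrA.
Qed.

Lemma psi_map_inj (z z' : dualp (extK E) -> K) : is_tensor z -> is_tensor z' ->
  psi_map z = psi_map z' -> z = z'.
Proof. by move=> [s ->] [s' ->] eq_psi; apply: funext => Phi; rewrite !tsum_extK eq_psi. Qed.

End Psi.

Section NormedTensor.
Variable K : numFieldType.
Variable beta : tensor_norm K.
Variables (m : nat) (G : 'I_m.+1 -> normedModType K).

(* The dummy dependency on beta gives every tensor norm its own normed
   structure on the same algebraic tensor product. *)
Definition btensor : Type := let _ := beta in tensor G.
HB.instance Definition _ := GRing.Lmodule.on btensor.

Definition bnorm (u : btensor) : K := tn beta (tval u).

Lemma bnormD (u v : btensor) : bnorm (u + v) <= bnorm u + bnorm v.
Proof.
have [beta_D _] := tnP beta G.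
by rewrite /bnorm tvalD; apply: beta_D; exact: tval_is_tensor.
Qed.

Lemma bnormZ a (u : btensor) : bnorm (a *: u) = `|a| * bnorm u.
Proof.
have [_ [beta_Z _]] := tnP beta G.
by rewrite /bnorm tvalZ; apply: beta_Z; exact: tval_is_tensor.
Qed.

Lemma bnorm_eq0 (u : btensor) : bnorm u = 0 -> u = 0.
Proof.
have [_ [_ [beta_eq0 _]]] := tnP beta G.
move/(beta_eq0 _ (tval_is_tensor u)) => u0; apply: val_inj.
by rewrite [val u]u0; exact: (esym (@tval0 _ _ G)).
Qed.

HB.instance Definition _ := Lmodule_isNormed.Build K btensor bnormD bnormZ bnorm_eq0.

Definition btprod (x : forall i, G i) : btensor := tprod x.

Lemma normr_sum_btprod (s : seq (K * (forall i, G i))) :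
  `|\sum_(p <- s) p.1 *: btprod p.2| = tn beta (tsum s).
Proof. exact: (congr1 (@tn _ beta m G) (tval_sum_tprod s)). Qed.

Lemma normr_btprod_le x : `|btprod x| <= \prod_(i < m.+1) `|x i|.
Proof.
have [_ [_ [_ [_ [beta_le_pi _]]]]] := tnP beta G.
have := beta_le_pi [:: ((1 : K), x)].
by rewrite big_cons big_nil normr1 mul1r addr0.
Qed.

Lemma btprod_multilinear : multilinear btprod.
Proof.
move=> i y a u v; apply: val_inj; apply: funext => phi.
rewrite -[LHS]/(tval (tprod (dfwith y i (a *: u + v))) phi).
rewrite -[RHS]/(tval (a *: tprod (dfwith y i u) + tprod (dfwith y i v)) phi).
by rewrite tvalD tvalZ !tval_tprod elem_dfwith_linear.
Qed.

Lemma btprod_cont_multilinear : cont_multilinear btprod.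
Proof.
split; first exact: btprod_multilinear.
apply: (bounded_multilinear_continuous btprod_multilinear (C := 1)) => // x.
by rewrite mul1r normr_btprod_le.
Qed.

End NormedTensor.

Section ScaledTensorProduct.
Variable K : numFieldType.
Variable beta : tensor_norm K.
Variables (n : nat) (E : 'I_n.+1 -> normedModType K).

Definition scaled_btprod (x : forall i, extK E i) : btensor beta E :=
  lastv x *: btprod beta (restr x).

Lemma scaled_btprod_multilinear : multilinear scaled_btprod.
Proof.
move=> i; case: (unliftP ord_max i) => [j|] -> w a u v.
  rewrite /scaled_btprod !restr_dfwith_lift !lastv_dfwith_lift ecastD ecastZ.
  rewrite (@btprod_multilinear _ beta _ E j (restr w)).
  by rewrite scalerDr !scalerA mulrC.
rewrite /scaled_btprod !restr_dfwith_max !lastv_dfwith_max ecastD ecastZ.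
by rewrite scalerDl -scalerA.
Qed.

Lemma scaled_btprod_cont_multilinear : cont_multilinear scaled_btprod.
Proof.
split; first exact: scaled_btprod_multilinear.
apply: (bounded_multilinear_continuous scaled_btprod_multilinear (C := 1)) => // x.
rewrite mul1r prodr_norm_extK /scaled_btprod normrZ.
by apply: ler_wpM2l => //; exact: normr_btprod_le.
Qed.

Lemma A1_scaled_btprod y : A1 scaled_btprod y = btprod beta y.
Proof. by rewrite /A1 /scaled_btprod lastv_ext_pt restr_ext_pt scale1r. Qed.

End ScaledTensorProduct.

Section SmoothPropB.
Variable K : numFieldType.
Variable beta : tensor_norm K.

Lemma lin_bound_A1 n (E : 'I_n.+1 -> normedModType K) (F : normedModType K)
    (A : (forall i, extK E i) -> F) :
  (forall z : dualp (extK E) -> K, is_tensor z -> tn beta (psi_map z) = tn beta z) ->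
  multilinear A -> forall C, lin_bound beta A C <-> lin_bound beta (A1 A) C.
Proof.
move=> psi_isometric A_ml C; split=> bound s.
  have := bound [seq (p.1, ext_pt p.2 1) | p <- s].
  by rewrite big_map -psi_isometric ?psi_map_ext_pt //; eexists.
have := bound [seq (p.1 * lastv p.2, restr p.2) | p <- s].
rewrite big_map -psi_map_tsum psi_isometric; last by eexists.
congr (_ <= _); congr (`|_|); apply: eq_bigr => p _ /=.
by rewrite -scalerA -multilinear_lastK.
Qed.

Lemma smooth_propB : smooth beta -> propB beta.
Proof.
move=> beta_smooth n E F A A_cml.
have [_ _ _ psi_isometric] := beta_smooth n E.
have same_bounds := lin_bound_A1 psi_isometric A_cml.1.
split=> [|_ C]; last exact: same_bounds.
split=> -[_ [C bound]]; split; [exact: A1_cont_multilinear | | exact: A_cml |].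
- by exists C; apply/same_bounds.
- by exists C; apply/same_bounds.
Qed.

Lemma propB_tn_psi_le : propB beta -> forall n (E : 'I_n.+1 -> normedModType K)
  (z : dualp (extK E) -> K), is_tensor z -> tn beta (psi_map z) <= tn beta z.
Proof.
move=> beta_B n E z [s ->].
have A_cml := @scaled_btprod_cont_multilinear _ beta _ E.
have [[_ A1_in] same_bounds] := beta_B n E _ _ A_cml.
have bound1 : lin_bound beta (A1 (scaled_btprod beta (E := E))) 1.
  move=> s0; rewrite mul1r -normr_sum_btprod.
  by under eq_bigr => p _ do rewrite A1_scaled_btprod.
have A_in : in_Lbeta beta (scaled_btprod beta (E := E)).
  by apply: A1_in; split; [exact: A1_cont_multilinear | exists 1].
have := (same_bounds A_in 1).2 bound1 s; rewrite mul1r; apply: le_trans.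
rewrite psi_map_tsum -normr_sum_btprod big_map.
by under eq_bigr => p _ do rewrite /= -scalerA.
Qed.

Lemma propB_tn_le_psi : propB beta -> forall n (E : 'I_n.+1 -> normedModType K)
  (z : dualp (extK E) -> K), is_tensor z -> tn beta z <= tn beta (psi_map z).
Proof.
move=> beta_B n E z [s ->].
have A_cml := @btprod_cont_multilinear _ beta _ (extK E).
have [_ same_bounds] := beta_B n E _ _ A_cml.
have bound1 : lin_bound beta (btprod beta (G := extK E)) 1.
  by move=> s0; rewrite mul1r normr_sum_btprod.
have := (same_bounds (conj A_cml (ex_intro _ 1 bound1)) 1).1 bound1.
pose s1 := [seq (p.1 * lastv p.2, restr p.2) | p <- s].
move=> /(_ s1); rewrite mul1r -psi_map_tsum.
have -> : \sum_(p <- s1) p.1 *: A1 (btprod beta (G := extK E)) p.2 =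
    \sum_(p <- [seq (q.1, ext_pt q.2 1) | q <- s1]) p.1 *: btprod beta p.2.
  by rewrite [RHS]big_map.
rewrite normr_sum_btprod.
have -> // : tsum [seq (q.1, ext_pt q.2 1) | q <- s1] = tsum s.
by apply: psi_map_inj; [eexists | eexists | rewrite psi_map_ext_pt psi_map_tsum].
Qed.

Lemma propB_smooth : propB beta -> smooth beta.
Proof.
move=> beta_B n E; split.
- by move=> z [s ->]; rewrite psi_map_tsum; eexists.
- exact: psi_map_inj.
- move=> w [s ->]; exists (tsum [seq (p.1, ext_pt p.2 1) | p <- s]); first by eexists.
  exact: psi_map_ext_pt.
- move=> z z_tensor; apply/le_anti.
  by rewrite propB_tn_psi_le ?propB_tn_le_psi.
Qed.

End SmoothPropB.

Theorem proposition2p4 (R : realType) (b : bool)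
    (beta : tensor_norm (scalar_field R b)) :
  smooth beta <-> propB beta.
Proof. by split; [exact: smooth_propB | exact: propB_smooth]. Qed.
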